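(* For all $\zeta\in\mathbb{C}$ with $|\Im\zeta|\le\pi/2$, \[ \frac{1}{\sqrt2}\left|\frac{e^\zeta}{1+e^\zeta}\right|\le\left|\frac{\operatorname{arcsinh}(e^\zeta)}{1+\operatorname{arcsinh}(e^\zeta)}\right|\le\sqrt2\left|\frac{e^\zeta}{1+e^\zeta}\right|, \] and for all $x\in\mathbb{R}$, $\frac{\operatorname{arcsinh}(e^x)}{1+\operatorname{arcsinh}(e^x)}\le\frac{e^x}{1+e^x}$.
   Context: $\operatorname{arcsinh}$ denotes the principal branch, $\operatorname{arcsinh}(w)=\log(w+\sqrt{1+w^2})$, extended continuously to the boundary $|\Im\zeta|=\pi/2$. *)

From Stdlib Require Import Reals.
From Coquelicot Require Import Complex.

Open Scope R_scope.

Definition Cexp (z : C) : C :=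
  (exp (Re z) * cos (Im z), exp (Re z) * sin (Im z)).

(* Principal argument, with values in (-PI, PI]. *)
Definition Carg (z : C) : R :=
  if Rle_dec 0 (Im z) then acos (Re z / Cmod z) else - acos (Re z / Cmod z).

Definition Clog (z : C) : C := (ln (Cmod z), Carg z).

(* Principal square root (Re >= 0; on the negative real axis sqrt(-a) = i sqrt a,
   i.e. sqrt z = exp (log z / 2)). *)
Definition Csqrt (z : C) : C :=
  (sqrt ((Cmod z + Re z) / 2),
   (if Rle_dec 0 (Im z) then 1 else -1) * sqrt ((Cmod z - Re z) / 2)).

Definition Casinh (w : C) : C :=
  Clog (Cplus w (Csqrt (Cplus (RtoC 1) (Cmult w w)))).

(* zeta |-> arcsinh(e^zeta) on the closed strip |Im zeta| <= PI/2, extended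
   continuously to the boundary.  In the open strip it is the principal
   branch; on Im zeta = PI/2 the principal formula already gives the continuous
   extension; on Im zeta = -PI/2 the continuous extension is obtained from
   the symmetry arcsinh(conj w) = conj(arcsinh w) (valid in the open strip). *)
Definition asinh_exp (zeta : C) : C :=
  if Rle_dec 0 (Im zeta) then Casinh (Cexp zeta)
  else Cconj (Casinh (Cexp (Cconj zeta))).

Definition Rasinh (x : R) : R := ln (x + sqrt (1 + x ^ 2)).

(* Write A = arcsinh w = a + i t.  After reflecting the lower half of the strip
   by conjugation, w = e^zeta lies in the closed first quadrant, A lies in the
   half-strip a >= 0, 0 <= t <= PI/2, and w = sinh A = sinh a cos t + i cosh a sin t,
   so |w|^2 = sinh^2 a + sin^2 t.  Both bounds become polynomial inequalities
   between |w|^2, |1 + w|^2, |A|^2 and |1 + A|^2, which follow from a <= sinh a,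
   Cusa's inequality 3 sinh a <= a (2 + cosh a), sin t <= t and
   t/2 <= tan (t/2).  On the real line the claim is a <= sinh a for
   a = arcsinh (e^x), since u |-> u / (1 + u) is increasing. *)

From Stdlib Require Import Reals Lra Psatz.
From Coquelicot Require Import Coquelicot.

Open Scope R_scope.

Lemma le_of_derive_nonneg (f df : R -> R) (a b : R) : a <= b ->
  (forall x, a <= x <= b -> is_derive f x (df x)) ->
  (forall x, a <= x <= b -> 0 <= df x) -> f a <= f b.
Proof.
intros Hab Hd Hdf.
destruct (Req_dec a b) as [<-|Hne]; [lra|].
destruct (MVT_cor2 f df a b) as [c [Hfc Hc]]; [lra| |].
- intros x Hx. apply is_derive_Reals, Hd. lra.
- assert (0 <= df c) by (apply Hdf; lra). nra.
Qed.

Lemma sin_le_id t : 0 <= t -> sin t <= t.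
Proof.
intros [Ht | <-]; [now apply Rlt_le, sin_lt_x|].
rewrite sin_0. lra.
Qed.

Lemma mul_cos_le_sin u : 0 <= u <= PI / 2 -> u * cos u <= sin u.
Proof.
intros Hu.
assert (H := le_of_derive_nonneg (fun x => sin x - x * cos x) (fun x => x * sin x) 0 u).
cbv beta in H. rewrite sin_0, Rmult_0_l in H.
cut (0 - 0 <= sin u - u * cos u); [lra|].
apply H; [lra| |].
- intros x _. auto_derive; [easy|ring].
- intros x Hx. apply Rmult_le_pos; [lra|]. apply sin_ge_0; lra.
Qed.

(* [(t/2)^2 <= tan^2 (t/2)], in half-angle form. *)
Lemma sqr_le_4_tan_half t : 0 <= t <= PI / 2 -> t * t * (1 + cos t) <= 4 * (1 - cos t).
Proof.
intros Ht. assert (HPI := PI_RGT_0).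
replace t with (2 * (t / 2)) by field. set (u := t / 2).
assert (1 + cos (2 * u) = 2 * (cos u * cos u)) by (rewrite cos_2a_cos; ring).
assert (1 - cos (2 * u) = 2 * (sin u * sin u)) by (rewrite cos_2a_sin; ring).
assert (u * cos u <= sin u) by (apply mul_cos_le_sin; unfold u; lra).
assert (0 <= u * cos u) by (apply Rmult_le_pos; [|apply cos_ge_0]; unfold u; lra).
nra.
Qed.

Lemma cosh_sqr x : cosh x ^ 2 = 1 + sinh x ^ 2.
Proof.
unfold cosh, sinh. rewrite exp_Ropp.
assert (0 < exp x) by apply exp_pos. field. lra.
Qed.

Lemma id_le_sinh x : 0 <= x -> x <= sinh x.
Proof.
intros Hx.
assert (H := le_of_derive_nonneg (fun y => sinh y - y) (fun y => cosh y - 1) 0 x Hx).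
cbv beta in H. rewrite sinh_0 in H.
cut (0 - 0 <= sinh x - x); [lra|].
apply H.
- intros y _. unfold sinh, cosh. auto_derive; [easy|field].
- intros y _. unfold cosh. rewrite exp_Ropp.
  assert (0 < exp y) by apply exp_pos.
  assert (0 <= (exp y - 1) ^ 2 / exp y) by (apply Rdiv_le_0_compat; [apply pow2_ge_0|lra]).
  replace ((exp y + / exp y) / 2 - 1) with ((exp y - 1) ^ 2 / exp y / 2) by (field; lra).
  lra.
Qed.

Lemma ln_ge_rational r : 1 <= r -> 3 * (r * r - 1) / (r * r + 4 * r + 1) <= ln r.
Proof.
intros Hr.
assert (H := le_of_derive_nonneg (fun x => ln x - 3 * (x * x - 1) / (x * x + 4 * x + 1))
  (fun x => (x - 1) ^ 4 / (x * (x * x + 4 * x + 1) ^ 2)) 1 r Hr).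
cbv beta in H. rewrite ln_1 in H.
cut (0 <= ln r - 3 * (r * r - 1) / (r * r + 4 * r + 1)); [lra|].
replace 0 with (0 - 3 * (1 * 1 - 1) / (1 * 1 + 4 * 1 + 1)) by field.
apply H.
- intros x Hx. auto_derive; [nra|]. field. nra.
- intros x Hx. apply Rdiv_le_0_compat.
  + replace ((x - 1) ^ 4) with (((x - 1) ^ 2) ^ 2) by ring. apply pow2_ge_0.
  + assert (0 < x * x + 4 * x + 1) by nra.
    apply Rmult_lt_0_compat; [lra|]. apply pow_lt. lra.
Qed.

Lemma sinh_cusa x : 0 <= x -> 3 * sinh x <= x * (2 + cosh x).
Proof.
intros Hx.
assert (Hr : 1 <= exp x) by (assert (H1 := exp_ineq1_le x); lra).
assert (H := ln_ge_rational _ Hr). rewrite ln_exp in H.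
unfold sinh, cosh. rewrite exp_Ropp. set (r := exp x) in *.
assert (Hq : 0 < r * r + 4 * r + 1) by nra.
apply (Rmult_le_reg_r (2 * r / (r * r + 4 * r + 1))).
{ apply Rdiv_lt_0_compat; lra. }
replace (3 * ((r - / r) / 2) * (2 * r / (r * r + 4 * r + 1)))
  with (3 * (r * r - 1) / (r * r + 4 * r + 1)) by (field; lra).
replace (x * (2 + (r + / r) / 2) * (2 * r / (r * r + 4 * r + 1))) with x by (field; lra).
exact H.
Qed.

Section Polynomial_bounds.

Variables a s : R.
Hypothesis a_ge0 : 0 <= a.
Hypothesis a_le_s : a <= s.

(* Squared form of Cusa's inequality for [s = sinh a], [h = cosh a]. *)
Lemma cusa_quadratic h : h * h = 1 + s * s -> 0 <= h -> 3 * s <= a * (2 + h) ->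
  s * s * (9 - a * a) - 12 * a * s + 3 * a * a <= 0.
Proof.
intros Hh Hh0 Hc.
destruct (Rle_dec (2 * a) (3 * s)).
- assert ((3 * s - 2 * a) * (3 * s - 2 * a) <= (a * h) * (a * h))
    by (apply Rmult_le_compat; nra).
  nra.
- nra.
Qed.

Hypothesis cusa_sq : s * s * (9 - a * a) - 12 * a * s + 3 * a * a <= 0.

Lemma lower_poly_real_axis : 0 <= s * s * (a * a - 2 * a - 1) + 4 * a * a * s + 2 * a * a.
Proof.
destruct (Rle_dec a (5 / 2)); [nra|].
assert (0 <= a * a - 2 * a - 1) by nra. nra.
Qed.

Lemma lower_poly_imag_axis : 0 <= s * s * (a * a - 2 * a) + 3 * a * a - 2 * a + 1.
Proof.
destruct (Rle_dec a 2) as [Ha2|Ha2]; [|assert (0 <= a * a - 2 * a) by nra; nra].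
set (L := 27 / 10 - 2 * a + 7 / 10 * a * a).
assert (HL : 0 < L) by (unfold L; assert (0 <= (a - 10 / 7) * (a - 10 / 7)) by apply Rle_0_sqr; nra).
assert (HC : 0 <= L * (39 / 10 * a * a - 2 * a + 1) - 324 / 100 * a * a).
{ unfold L.
  assert (0 <= (a * a - 1685 / 1000 * a + 6 / 10) * (a * a - 1685 / 1000 * a + 6 / 10)) by apply Rle_0_sqr.
  assert (0 <= (a - 98 / 100) * (a - 98 / 100)) by apply Rle_0_sqr.
  nra. }
(* The discriminant bound [HC] makes this quadratic in [s] nonnegative. *)
assert (HR : 0 <= L * s * s - 36 / 10 * a * s + (39 / 10 * a * a - 2 * a + 1)).
{ assert (0 <= L * (L * s * s - 36 / 10 * a * s + (39 / 10 * a * a - 2 * a + 1))).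
  { replace (L * (L * s * s - 36 / 10 * a * s + (39 / 10 * a * a - 2 * a + 1)))
      with ((L * s - 18 / 10 * a) ^ 2 + (L * (39 / 10 * a * a - 2 * a + 1) - 324 / 100 * a * a))
      by field.
    apply Rplus_le_le_0_compat; [apply pow2_ge_0|exact HC]. }
  nra. }
unfold L in HR. nra.
Qed.

(* With [c = cos t], [n = sin t], this is [|w|^2 |1 + A|^2 <= 2 |A|^2 |1 + w|^2] for
   [A = a + i t], [w = sinh A]. The difference is bounded below by the convex
   combination, with weights [c] and [1 - c], of its values on the two axes. *)
Lemma lower_sq_bound t c n : 0 <= c -> 0 <= n -> c * c + n * n = 1 -> n <= t ->
  (s * s + n * n) * (1 + 2 * a + (a * a + t * t))
  <= 2 * (a * a + t * t) * (1 + 2 * (s * c) + (s * s + n * n)).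
Proof.
intros Hc Hn Hcn Hnt.
assert (H0 := lower_poly_imag_axis). assert (H1 := lower_poly_real_axis).
assert (Hc1 : c <= 1) by nra.
assert (Hs : 0 <= s) by lra.
set (m := n * n).
assert (HF : 0 <= (a * a + m) * (s * s + m + 4 * s * c + 2) - (2 * a + 1) * (s * s + m)).
{ replace ((a * a + m) * (s * s + m + 4 * s * c + 2) - (2 * a + 1) * (s * s + m)) with
    (s * s * (a * a - 2 * a - 1) + 2 * a * a + 4 * a * a * s * c
     + m * ((a - 1) ^ 2 + s * s + m + 4 * s * c)) by ring.
  assert (Hm : m = 1 - c * c) by (unfold m; lra).
  assert (0 <= m * m) by nra.
  assert (0 <= m * (4 * s * c)) by (rewrite Hm; apply Rmult_le_pos; nra).
  assert ((1 - c) * (s * s + (a - 1) ^ 2) <= m * (s * s + (a - 1) ^ 2))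
    by (rewrite Hm; apply Rmult_le_compat_r; nra).
  assert (0 <= (1 - c) * (s * s * (a * a - 2 * a) + 3 * a * a - 2 * a + 1))
    by (apply Rmult_le_pos; lra).
  assert (0 <= c * (s * s * (a * a - 2 * a - 1) + 4 * a * a * s + 2 * a * a))
    by (apply Rmult_le_pos; lra).
  nra. }
assert (a * a + m <= a * a + t * t) by (unfold m; nra).
assert (0 <= s * s + m + 4 * s * c + 2) by (unfold m; nra).
unfold m in *. nra.
Qed.

(* [|A|^2 |1 + w|^2 <= 2 |w|^2 |1 + A|^2], with the notation of [lower_sq_bound]. *)
Lemma upper_sq_bound t c n : 0 <= c -> c * c + n * n = 1 ->
  t * t * (1 + c) <= 4 * (1 - c) ->
  (a * a + t * t) * (1 + 2 * (s * c) + (s * s + n * n))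
  <= 2 * (s * s + n * n) * (1 + 2 * a + (a * a + t * t)).
Proof.
intros Hc Hcn Ht2.
assert (Hc1 : c <= 1) by nra. assert (Hs : 0 <= s) by lra.
set (E := s * s + n * n). set (X := 2 * s * c + 1 - E).
cut ((a * a + t * t) * X <= 2 * (2 * a + 1) * E); [unfold X, E; nra|].
destruct (Rle_dec X 0) as [HX|HX].
{ assert (0 <= E) by (unfold E; nra). nra. }
assert (HA : a * a * X <= 2 * a * s * s + s * s).
{ assert (a * c <= s) by nra.
  assert (a * c * s <= s * s) by (apply Rmult_le_compat_r; lra).
  assert (a * a * (2 * s * c) <= 2 * a * s * s)
    by (replace (a * a * (2 * s * c)) with (2 * a * (a * c * s)) by ring;
        replace (2 * a * s * s) with (2 * a * (s * s)) by ring;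
        apply Rmult_le_compat_l; lra).
  assert (a * a * (c * c) <= s * s) by (assert (c * c <= 1) by nra; assert (a * a <= s * s) by nra; nra).
  unfold X, E. nra. }
assert (HB : 4 * (1 - c) * X <= 8 * (1 - c) * (c * c)).
{ assert (X <= 2 * c * c) by (assert (0 <= (s - c) ^ 2) by apply pow2_ge_0; unfold X, E; nra).
  replace (8 * (1 - c) * (c * c)) with (4 * (1 - c) * (2 * c * c)) by ring.
  apply Rmult_le_compat_l; lra. }
assert (HE : E = s * s + (1 - c) * (1 + c)) by (unfold E; nra).
assert ((1 + c) * ((a * a + t * t) * X) <= ((1 + c) * a * a + 4 * (1 - c)) * X)
  by (replace ((1 + c) * ((a * a + t * t) * X)) with (((1 + c) * a * a + t * t * (1 + c)) * X) by ring;
      apply Rmult_le_compat_r; lra).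
assert (((1 + c) * a * a + 4 * (1 - c)) * X <= (1 + c) * (2 * a * s * s + s * s) + 8 * (1 - c) * (c * c))
  by (assert ((1 + c) * (a * a * X) <= (1 + c) * (2 * a * s * s + s * s)) by (apply Rmult_le_compat_l; lra); nra).
assert (8 * (1 - c) * (c * c) <= 2 * (1 - c) * (1 + c) * (1 + c))
  by (assert (0 <= (1 - c) * ((1 - c) * (1 + 3 * c))) by (apply Rmult_le_pos; nra); nra).
apply Rmult_le_reg_l with (1 + c); [lra|].
rewrite HE.
assert (0 <= (1 + c) * (2 * a * s * s + s * s)) by (apply Rmult_le_pos; nra).
assert (0 <= (1 + c) * (1 - c) * (1 + c) * a) by (repeat apply Rmult_le_pos; lra).
nra.
Qed.

End Polynomial_bounds.

Lemma Cmod_ratio_le_sqrt2 (z u : C) : (1 + z)%C <> 0 -> (1 + u)%C <> 0 ->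
  Cmod z ^ 2 * Cmod (1 + u) ^ 2 <= 2 * Cmod u ^ 2 * Cmod (1 + z) ^ 2 ->
  Cmod (z / (1 + z)) <= sqrt 2 * Cmod (u / (1 + u)).
Proof.
intros Hz Hu H.
rewrite !Cmod_div by assumption.
assert (HY := proj1 (Cmod_gt_0 _) Hz). assert (HV := proj1 (Cmod_gt_0 _) Hu).
assert (HX := Cmod_ge_0 z). assert (HU := Cmod_ge_0 u).
set (X := Cmod z) in *. set (Y := Cmod (1 + z)) in *.
set (U := Cmod u) in *. set (V := Cmod (1 + u)) in *.
assert (HXV : X * V <= sqrt 2 * (U * Y)).
{ rewrite <- (sqrt_pow2 (X * V)), <- (sqrt_pow2 (U * Y)), <- sqrt_mult_alt by nra.
  apply sqrt_le_1_alt. nra. }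
apply (Rmult_le_reg_r (Y * V)); [nra|].
replace (X / Y * (Y * V)) with (X * V) by (field; lra).
replace (sqrt 2 * (U / V) * (Y * V)) with (sqrt 2 * (U * Y)) by (field; lra).
exact HXV.
Qed.

Lemma Csqrt_sqr (z : C) : (Csqrt z * Csqrt z)%C = z.
Proof.
destruct z as [x y]. unfold Csqrt, Cmult, Re, Im. simpl.
assert (Hr := Cmod2_alt (x, y)). simpl in Hr. set (r := Cmod (x, y)) in *.
assert (Hr0 : 0 <= r) by apply Cmod_ge_0.
assert (Hxr : Rabs x <= r) by (apply Rsqr_incr_0_var; [rewrite <- Rsqr_abs; unfold Rsqr; nra|lra]).
apply Rabs_le_between in Hxr.
assert (Hp := sqrt_sqrt ((r + x) / 2)). assert (Hq := sqrt_sqrt ((r - x) / 2)).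
assert (Hpq : sqrt ((r + x) / 2) * sqrt ((r - x) / 2) = Rabs y / 2).
{ rewrite <- sqrt_mult_alt by lra.
  replace ((r + x) / 2 * ((r - x) / 2)) with ((Rabs y / 2) ^ 2)
    by (assert (Hy2 := pow2_abs y); nra).
  apply sqrt_pow2. assert (0 <= Rabs y) by apply Rabs_pos. lra. }
f_equal; destruct (Rle_dec 0 y) as [Hy|Hy].
- nra.
- nra.
- rewrite Rabs_pos_eq in Hpq by lra. nra.
- rewrite Rabs_left in Hpq by lra. nra.
Qed.

Lemma Csqrt_nonneg (z : C) : 0 <= Im z -> 0 <= Re (Csqrt z) /\ 0 <= Im (Csqrt z).
Proof.
intros Hz. unfold Csqrt, Re at 1, Im at 2. simpl.
destruct (Rle_dec 0 (Im z)) as [_|]; [|lra].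
rewrite Rmult_1_l. split; apply sqrt_pos.
Qed.

Lemma Cexp_Clog (z : C) : z <> 0%C -> Cexp (Clog z) = z.
Proof.
intros Hz. destruct z as [x y].
assert (Hr := Cmod2_alt (x, y)). assert (Hr0 := proj1 (Cmod_gt_0 _) Hz).
unfold Cexp, Clog, Carg, Re, Im in *. simpl in *. set (r := Cmod (x, y)) in *.
rewrite exp_ln by lra.
assert (Hu : -1 <= x / r <= 1).
{ split; [apply (Rmult_le_reg_r r)|apply (Rmult_le_reg_r r)]; try lra;
  unfold Rdiv; rewrite Rmult_assoc, Rinv_l, Rmult_1_r by lra; nra. }
assert (Hsin : sqrt (1 - (x / r)²) = Rabs y / r).
{ replace (1 - (x / r)²) with ((Rabs y / r) ^ 2)
    by (assert (Hy2 := pow2_abs y); unfold Rsqr; field_simplify_eq; nra).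
  apply sqrt_pow2. apply Rdiv_le_0_compat; [apply Rabs_pos|lra]. }
destruct (Rle_dec 0 y) as [Hy|Hy].
- rewrite cos_acos, sin_acos, Hsin, Rabs_pos_eq by lra.
  f_equal; field; lra.
- rewrite cos_neg, sin_neg, cos_acos, sin_acos, Hsin, Rabs_left by lra.
  f_equal; field; lra.
Qed.

Lemma Carg_first_quadrant (z : C) : z <> 0%C -> 0 <= Re z -> 0 <= Im z ->
  0 <= Carg z <= PI / 2.
Proof.
intros Hz Hx Hy. assert (Hr := proj1 (Cmod_gt_0 _) Hz).
assert (Hmod := Cmod2_alt z).
unfold Carg. destruct (Rle_dec 0 (Im z)) as [_|]; [|lra].
set (u := Re z / Cmod z).
assert (Hu : 0 <= u <= 1).
{ unfold u. split; [apply Rdiv_le_0_compat; lra|].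
  apply (Rmult_le_reg_r (Cmod z)); [lra|].
  unfold Rdiv. rewrite Rmult_assoc, Rinv_l, Rmult_1_r by lra. nra. }
assert (Hb := acos_bound u). split; [lra|].
destruct (Rle_dec (acos u) (PI / 2)) as [|Hgt]; [easy|].
assert (cos (acos u) < 0) by (apply cos_lt_0; lra).
rewrite cos_acos in *; lra.
Qed.

Definition Csinh (z : C) : C := (sinh (Re z) * cos (Im z), cosh (Re z) * sin (Im z)).

Lemma Cexp_mult_Cexp_opp (z : C) : (Cexp z * Cexp (- z))%C = 1%C.
Proof.
destruct z as [a t]. unfold Cexp, Cmult, Copp, Re, Im, RtoC. simpl.
rewrite cos_neg, sin_neg, exp_Ropp.
assert (Hcs := sin2_cos2 t). unfold Rsqr in Hcs.
assert (0 < exp a) by apply exp_pos.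
f_equal; field_simplify; lra.
Qed.

Lemma Csinh_Cexp (z : C) : (2 * Csinh z)%C = (Cexp z - Cexp (- z))%C.
Proof.
destruct z as [a t]. unfold Csinh, Cexp, Cmult, Cminus, Cplus, Copp, Re, Im, RtoC. simpl.
rewrite cos_neg, sin_neg. unfold sinh, cosh.
f_equal; field.
Qed.

Lemma Casinh_root (w : C) :
  let S := (w + Csqrt (1 + w * w))%C in (S * (S - 2 * w))%C = 1%C.
Proof.
intros S. assert (H := Csqrt_sqr (1 + w * w)).
replace (Csqrt (1 + w * w)) with (S - w)%C in H by (unfold S; ring).
transitivity ((S - w) * (S - w) - w * w)%C; [ring|].
rewrite H. ring.
Qed.

Lemma Casinh_root_neq0 (w : C) : (w + Csqrt (1 + w * w))%C <> 0%C.
Proof.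
intros H0. assert (HS := Casinh_root w). cbv zeta in HS.
rewrite H0, Cmult_0_l in HS. now apply C1_nz.
Qed.

Lemma Csinh_Casinh (w : C) : Csinh (Casinh w) = w.
Proof.
pose proof (Casinh_root w) as HS. pose proof (Casinh_root_neq0 w) as HS0. cbv zeta in HS.
unfold Casinh. set (S := (w + Csqrt (1 + w * w))%C) in *.
set (L := Clog S).
assert (HL : Cexp L = S) by now apply Cexp_Clog.
assert (Hopp : Cexp (- L) = (S - 2 * w)%C).
{ assert (H := Cexp_mult_Cexp_opp L). rewrite HL in H.
  replace (Cexp (- L)) with (/ S * (S * Cexp (- L)))%C by (field; exact HS0).
  rewrite H, <- HS. field. exact HS0. }
assert (H2 : RtoC 2 <> 0%C) by (intros H; injection H; lra).
assert (Hsinh := Csinh_Cexp L). rewrite HL, Hopp in Hsinh.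
replace (Csinh L) with (/ 2 * (2 * Csinh L))%C by (field; exact H2).
rewrite Hsinh. field.
Qed.

Lemma Casinh_first_quadrant (w : C) : 0 <= Re w -> 0 <= Im w ->
  0 <= Re (Casinh w) /\ 0 <= Im (Casinh w) <= PI / 2.
Proof.
intros Hx Hy.
pose proof (Casinh_root w) as HS. pose proof (Casinh_root_neq0 w) as HS0. cbv zeta in HS.
assert (Hr : 0 <= Re (Csqrt (1 + w * w)) /\ 0 <= Im (Csqrt (1 + w * w))).
{ apply Csqrt_nonneg. destruct w as [x y]. unfold Re, Im in *. simpl in *. nra. }
unfold Casinh. set (S := (w + Csqrt (1 + w * w))%C) in *.
(* [S (S - 2 w) = 1] with [|S - 2 w| <= |S|] forces [|S| >= 1]. *)
assert (Hmod : 1 <= Cmod S).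
{ assert (H1 := f_equal Cmod HS). rewrite Cmod_mult, Cmod_1 in H1.
  assert (Cmod (S - 2 * w) <= Cmod S).
  { unfold S. destruct (Csqrt (1 + w * w)) as [p q]. destruct w as [x y].
    unfold Re, Im in *. simpl in *.
    unfold Cmod. apply sqrt_le_1_alt. simpl. nra. }
  assert (HSm := Cmod_ge_0 (S - 2 * w)). nra. }
split.
- simpl. rewrite <- ln_1. apply ln_le; lra.
- apply Carg_first_quadrant; [exact HS0| |];
    unfold S; destruct (Csqrt (1 + w * w)); destruct w; unfold Re, Im in *; simpl in *; lra.
Qed.

Lemma inv_sqrt2_mul_le x y : x <= sqrt 2 * y -> / sqrt 2 * x <= y.
Proof.
intros H. assert (0 < sqrt 2) by (apply sqrt_lt_R0; lra).
apply (Rmult_le_reg_l (sqrt 2)); [lra|].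
rewrite <- Rmult_assoc, Rinv_r, Rmult_1_l by lra. exact H.
Qed.

Lemma Csinh_ratio_bounds (A : C) : 0 <= Re A -> 0 <= Im A <= PI / 2 ->
  / sqrt 2 * Cmod (Csinh A / (1 + Csinh A)) <= Cmod (A / (1 + A))
  /\ Cmod (A / (1 + A)) <= sqrt 2 * Cmod (Csinh A / (1 + Csinh A)).
Proof.
destruct A as [a t]. unfold Csinh, Re, Im. simpl. intros Ha Ht.
assert (HPI := PI_RGT_0).
set (s := sinh a). set (h := cosh a). set (c := cos t). set (n := sin t).
assert (Hcn : c * c + n * n = 1) by (unfold c, n; rewrite <- (sin2_cos2 t); unfold Rsqr; ring).
assert (Hhs : h * h = 1 + s * s) by (assert (H := cosh_sqr a); simpl in H; unfold h, s; lra).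
assert (Hh : 0 <= h) by (unfold h, cosh; assert (H := exp_pos a); assert (H1 := exp_pos (- a)); lra).
assert (Has : a <= s) by now apply id_le_sinh.
assert (Hcusa : s * s * (9 - a * a) - 12 * a * s + 3 * a * a <= 0)
  by (apply cusa_quadratic with h; auto; now apply sinh_cusa).
assert (Hc : 0 <= c) by (apply cos_ge_0; lra).
assert (Hn : 0 <= n) by (apply sin_ge_0; lra).
assert (Hnt : n <= t) by (apply sin_le_id; lra).
assert (Ht2 : t * t * (1 + c) <= 4 * (1 - c)) by now apply sqr_le_4_tan_half.
assert (Hw : Cmod (s * c, h * n) ^ 2 = s * s + n * n)
  by (rewrite Cmod2_alt; unfold Re, Im; simpl; nra).
assert (Hw1 : Cmod (Cplus 1 (s * c, h * n)) ^ 2 = 1 + 2 * (s * c) + (s * s + n * n))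
  by (rewrite Cmod2_alt; unfold Re, Im; simpl; nra).
assert (HA : Cmod (a, t) ^ 2 = a * a + t * t)
  by (rewrite Cmod2_alt; unfold Re, Im; simpl; ring).
assert (HA1 : Cmod (1 + (a, t)) ^ 2 = 1 + 2 * a + (a * a + t * t))
  by (rewrite Cmod2_alt; unfold Re, Im; simpl; ring).
assert (Hw0 : Cplus 1 (s * c, h * n) <> 0%C)
  by (intros H; apply (f_equal fst) in H; simpl in H; nra).
assert (HA0 : (1 + (a, t))%C <> 0%C)
  by (intros H; apply (f_equal fst) in H; simpl in H; lra).
split.
- apply inv_sqrt2_mul_le, Cmod_ratio_le_sqrt2; [easy|easy|].
  rewrite Hw, Hw1, HA, HA1. now apply lower_sq_bound.
- apply Cmod_ratio_le_sqrt2; [easy|easy|].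
  rewrite Hw, Hw1, HA, HA1. apply upper_sq_bound; lra.
Qed.

Lemma Casinh_ratio_bounds (w : C) : 0 <= Re w -> 0 <= Im w ->
  / sqrt 2 * Cmod (w / (1 + w)) <= Cmod (Casinh w / (1 + Casinh w))
  /\ Cmod (Casinh w / (1 + Casinh w)) <= sqrt 2 * Cmod (w / (1 + w)).
Proof.
intros Hx Hy. destruct (Casinh_first_quadrant w Hx Hy) as [Ha Ht].
pose proof (Csinh_ratio_bounds (Casinh w) Ha Ht) as H.
now rewrite Csinh_Casinh in H.
Qed.

Lemma Re_Cexp_nonneg (z : C) : Rabs (Im z) <= PI / 2 -> 0 <= Re (Cexp z).
Proof.
intros Hz. apply Rabs_le_between in Hz. unfold Cexp, Re at 1. simpl.
apply Rmult_le_pos; [apply Rlt_le, exp_pos|]. apply cos_ge_0; lra.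
Qed.

Lemma Im_Cexp_nonneg (z : C) : 0 <= Im z <= PI -> 0 <= Im (Cexp z).
Proof.
intros Hz. unfold Cexp, Im at 1. simpl.
apply Rmult_le_pos; [apply Rlt_le, exp_pos|]. apply sin_ge_0; lra.
Qed.

Lemma Cexp_conj (z : C) : Cexp (Cconj z) = Cconj (Cexp z).
Proof.
destruct z as [u v]. unfold Cexp, Cconj, Re, Im. simpl.
rewrite cos_neg, sin_neg. f_equal; ring.
Qed.

Lemma Cmod_ratio_conj (z : C) :
  Cmod (Cconj z / (1 + Cconj z)) = Cmod (z / (1 + z)).
Proof.
destruct z as [u v]. unfold Cmod, Cdiv, Cmult, Cinv, Cplus, Cconj, RtoC. simpl.
f_equal.
replace ((0 + - v) * ((0 + - v) * 1)) with ((0 + v) * ((0 + v) * 1)) by ring.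
set (d := (1 + u) * ((1 + u) * 1) + (0 + v) * ((0 + v) * 1)). unfold Rdiv. ring.
Qed.

Lemma Rasinh_arcsinh x : Rasinh x = arcsinh x.
Proof. unfold Rasinh, arcsinh. now rewrite Rplus_comm with (r1 := 1). Qed.

Lemma Rasinh_exp_ratio_le x :
  Rasinh (exp x) / (1 + Rasinh (exp x)) <= exp x / (1 + exp x).
Proof.
rewrite Rasinh_arcsinh. set (L := arcsinh (exp x)).
assert (He : sinh L = exp x) by apply sinh_arcsinh.
assert (HL : 0 <= L).
{ destruct (Rle_dec 0 L) as [|HL]; [easy|].
  assert (sinh L < sinh 0) by (apply sinh_lt; lra).
  rewrite sinh_0, He in *. assert (H1 := exp_pos x). lra. }
assert (HLe : L <= exp x) by (rewrite <- He; now apply id_le_sinh).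
assert (Hex := exp_pos x).
apply (Rmult_le_reg_r ((1 + L) * (1 + exp x))); [nra|].
replace (L / (1 + L) * ((1 + L) * (1 + exp x))) with (L * (1 + exp x)) by (field; lra).
replace (exp x / (1 + exp x) * ((1 + L) * (1 + exp x))) with (exp x * (1 + L)) by (field; lra).
nra.
Qed.

Theorem lemma4 :
  (forall zeta : C, Rabs (Im zeta) <= PI / 2 ->
     / sqrt 2 * Cmod (Cdiv (Cexp zeta) (Cplus (RtoC 1) (Cexp zeta)))
       <= Cmod (Cdiv (asinh_exp zeta) (Cplus (RtoC 1) (asinh_exp zeta)))
     /\ Cmod (Cdiv (asinh_exp zeta) (Cplus (RtoC 1) (asinh_exp zeta)))
       <= sqrt 2 * Cmod (Cdiv (Cexp zeta) (Cplus (RtoC 1) (Cexp zeta))))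
  /\ (forall x : R,
     Rasinh (exp x) / (1 + Rasinh (exp x)) <= exp x / (1 + exp x)).
Proof.
split; [|exact Rasinh_exp_ratio_le].
intros zeta Hz. assert (HPI := PI_RGT_0). unfold asinh_exp.
destruct (Rle_dec 0 (Im zeta)) as [Hi|Hi].
- apply Casinh_ratio_bounds; [now apply Re_Cexp_nonneg|].
  apply Im_Cexp_nonneg. apply Rabs_le_between in Hz. lra.
- rewrite Cmod_ratio_conj, <- (Cmod_ratio_conj (Cexp zeta)), <- Cexp_conj.
  apply Casinh_ratio_bounds.
  + apply Re_Cexp_nonneg. now rewrite im_conj, Rabs_Ropp.
  + apply Im_Cexp_nonneg. rewrite im_conj. apply Rabs_le_between in Hz. lra.
Qed.
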